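(* Let $\Psi=\begin{bmatrix}\Psi_{11}&\Psi_{12}\\ \Psi_{12}^\top&\Psi_{22}\end{bmatrix}$ be symmetric with $\Psi_{11}\in\mathbb{R}^{p\times p}$, $\Psi_{22}\in\mathbb{R}^{q\times q}$, and let $\mathcal{M}=\{Z\in\mathbb{R}^{p\times q}: \begin{bmatrix} I\\ Z^\top\end{bmatrix}^\top\Psi\begin{bmatrix} I\\ Z^\top\end{bmatrix}\ge0\}$. Define $\Psi|\Psi_{22}=\Psi_{11}-\Psi_{12}\Psi_{22}^{-1}\Psi_{12}^\top$ and $\Psi^\sharp=\begin{bmatrix}0&-I_q\\ I_p&0\end{bmatrix}\Psi^{-1}\begin{bmatrix}0&-I_p\\ I_q&0\end{bmatrix}$. Suppose $\Psi|\Psi_{22}>0$ and $\Psi_{22}<0$. Then $\mathcal{M}=\mathcal{M}_1=\mathcal{M}_2$, where \[ \mathcal{M}_1=\left\{Z: \begin{bmatrix} I\\ Z\end{bmatrix}^\top\Psi^\sharp\begin{bmatrix} I\\ Z\end{bmatrix}\ge0\right\},\qquad \mathcal{M}_2=\left\{Z: \begin{bmatrix} I\\ Z^\top\end{bmatrix}^\top\Psi\begin{bmatrix} I\\ Z^\top\end{bmatrix}=\mathcal{Q}\ \text{for some}\ \mathcal{Q}\ \text{with}\ 0\le\mathcal{Q}\le\Psi|\Psi_{22}\right\}. \] *)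

From HB Require Import structures.
From mathcomp Require Import all_boot all_order all_algebra.
From mathcomp Require Export reals.
Set Implicit Arguments. Unset Strict Implicit. Unset Printing Implicit Defensive.
Import Order.TTheory GRing.Theory Num.Theory.
Local Open Scope ring_scope.

Section Defs.
Variable R : realType.

Definition psdmx n (A : 'M[R]_n) : Prop :=
  A^T = A /\ forall x : 'cV[R]_n, 0 <= (x^T *m A *m x) 0 0.
Definition pdmx n (A : 'M[R]_n) : Prop :=
  A^T = A /\ forall x : 'cV[R]_n, x != 0 -> 0 < (x^T *m A *m x) 0 0.
Definition ndmx n (A : 'M[R]_n) : Prop :=
  A^T = A /\ forall x : 'cV[R]_n, x != 0 -> (x^T *m A *m x) 0 0 < 0.

Variables p q : nat.

Definition Psi (P11 : 'M[R]_p) (P12 : 'M[R]_(p, q)) (P22 : 'M[R]_q)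
  : 'M[R]_(p + q) := block_mx P11 P12 P12^T P22.

Definition schur (P11 : 'M[R]_p) (P12 : 'M[R]_(p, q)) (P22 : 'M[R]_q)
  : 'M[R]_p := P11 - P12 *m invmx P22 *m P12^T.

Definition Jl : 'M[R]_(q + p, p + q) := block_mx 0 (- 1%:M) 1%:M 0.
Definition Jr : 'M[R]_(p + q, q + p) := block_mx 0 (- 1%:M) 1%:M 0.
Definition Psi_sharp (Ps : 'M[R]_(p + q)) : 'M[R]_(q + p) :=
  Jl *m invmx Ps *m Jr.

Definition quadZ (Ps : 'M[R]_(p + q)) (Z : 'M[R]_(p, q)) : 'M[R]_p :=
  (col_mx 1%:M Z^T)^T *m Ps *m col_mx 1%:M Z^T.

Definition inM (Ps : 'M[R]_(p + q)) (Z : 'M[R]_(p, q)) : Prop :=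
  psdmx (quadZ Ps Z).
Definition inM1 (Ps : 'M[R]_(p + q)) (Z : 'M[R]_(p, q)) : Prop :=
  psdmx ((col_mx (1%:M : 'M[R]_q) Z)^T *m Psi_sharp Ps *m col_mx 1%:M Z).
Definition inM2 (Ps : 'M[R]_(p + q)) (S : 'M[R]_p) (Z : 'M[R]_(p, q)) : Prop :=
  exists Q : 'M[R]_p, quadZ Ps Z = Q /\ psdmx Q /\ psdmx (S - Q).
End Defs.

From HB Require Import structures.
From mathcomp Require Import all_boot all_order all_algebra.
From mathcomp Require Import reals.
From mathcomp Require Import lra.
Import Order.TTheory GRing.Theory Num.Theory.
Set Implicit Arguments. Unset Strict Implicit. Unset Printing Implicit Defensive.
Local Open Scope ring_scope.

(* With D := P22^-1 and S := P11 - P12 D P12^T, Psi factors as U diag(S, P22) U^T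
   for the shear U = [I, P12 D; 0, I].  Hence, with W := Z + P12 D and B := -P22 > 0,
   the three memberships read S - W B W^T >= 0, B^-1 - W^T S^-1 W >= 0, and
   S - W B W^T = Q with 0 <= Q <= S.  The first two are equivalent by completing
   the square, and the third adds nothing to the first because W B W^T >= 0. *)

Section MatrixAlgebra.
Variable R : comUnitRingType.

Lemma mulmx1_invmx n (A B : 'M[R]_n) : A *m B = 1%:M -> invmx A = B.
Proof.
move=> AB1; have [A_unit _] := mulmx1_unit AB1.
by rewrite -[invmx A]mulmx1 -AB1 mulmxA mulVmx // mul1mx.
Qed.

Lemma invmxM n (A B : 'M[R]_n) :
  A \in unitmx -> B \in unitmx -> invmx (A *m B) = invmx B *m invmx A.
Proof.
by move=> uA uB; apply: mulmx1_invmx; rewrite -mulmxA (mulmxA B) mulmxV // mul1mx mulmxV.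
Qed.

Lemma invmxN n (A : 'M[R]_n) : A \in unitmx -> invmx (- A) = - invmx A.
Proof. by move=> uA; apply: mulmx1_invmx; rewrite mulNmx mulmxN opprK mulmxV. Qed.

Lemma bilinear_formC n (B : 'M[R]_n) (a b : 'cV[R]_n) :
  B^T = B -> (a^T *m B *m b) 0 0 = (b^T *m B *m a) 0 0.
Proof.
move=> B_sym; have -> : a^T *m B *m b = (b^T *m B *m a)^T.
  by rewrite !trmx_mul trmxK B_sym mulmxA.
by rewrite mxE.
Qed.

Lemma quad_block_diag m1 m2 n (X : 'M[R]_m1) (Y : 'M[R]_m2)
    (A : 'M[R]_(m1, n)) (B : 'M[R]_(m2, n)) :
  (col_mx A B)^T *m block_mx X 0 0 Y *m col_mx A B = A^T *m X *m A + B^T *m Y *m B.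
Proof.
by rewrite tr_col_mx mul_row_block !mulmx0 addr0 add0r mul_row_col.
Qed.

End MatrixAlgebra.

Section Loewner.
Variable R : realType.

Lemma pdmx_psdmx n (A : 'M[R]_n) : pdmx A -> psdmx A.
Proof.
move=> [A_sym A_pd]; split=> // x.
by have [->|/A_pd/ltW//] := eqVneq x 0; rewrite mulmx0 mxE.
Qed.

Lemma ndmx_pdmxN n (A : 'M[R]_n) : ndmx A -> pdmx (- A).
Proof.
move=> [A_sym A_nd]; split=> [|x /A_nd]; first by rewrite linearN /= A_sym.
by rewrite mulmxN mulNmx [in X in _ -> X]mxE oppr_gt0.
Qed.

Lemma form_neq0_unitmx n (A : 'M[R]_n) :
  (forall x : 'cV[R]_n, x != 0 -> (x^T *m A *m x) 0 0 != 0) -> A \in unitmx.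
Proof.
move=> A_def; rewrite unitmxE unitfE; apply/negP => /det0P [v v_neq0 vA0].
have vT_neq0 : v^T != 0 by rewrite -(inj_eq (@trmx_inj _ _ _)) trmxK trmx0.
by have := A_def _ vT_neq0; rewrite trmxK vA0 mul0mx mxE eqxx.
Qed.

Lemma pdmx_unit n (A : 'M[R]_n) : pdmx A -> A \in unitmx.
Proof. by move=> [_ A_pd]; apply: form_neq0_unitmx => x /A_pd /lt0r_neq0. Qed.

Lemma ndmx_unit n (A : 'M[R]_n) : ndmx A -> A \in unitmx.
Proof. by move=> [_ A_nd]; apply: form_neq0_unitmx => x /A_nd /ltr0_neq0. Qed.

Lemma psdmx_inv n (A : 'M[R]_n) : psdmx A -> A \in unitmx -> psdmx (invmx A).
Proof.
move=> [A_sym A_psd] A_unit; split=> [|x]; first by rewrite trmx_inv A_sym.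
by have := A_psd (invmx A *m x); rewrite trmx_mul trmx_inv A_sym !mulmxA mulmxKV.
Qed.

Lemma psdmx_congr n m (B : 'M[R]_m) (W : 'M[R]_(n, m)) :
  psdmx B -> psdmx (W *m B *m W^T).
Proof.
move=> [B_sym B_psd]; split=> [|x]; first by rewrite !trmx_mul trmxK B_sym mulmxA.
by have := B_psd (W^T *m x); rewrite trmx_mul trmxK !mulmxA.
Qed.

Lemma psdmx_dual n m (A : 'M[R]_n) (B : 'M[R]_m) (W : 'M[R]_(n, m)) :
  A^T = A -> A \in unitmx -> psdmx B -> B \in unitmx ->
  psdmx (A - W *m B *m W^T) -> psdmx (invmx B - W^T *m invmx A *m W).
Proof.
move=> A_sym A_unit [B_sym B_psd] B_unit [_ AWB_psd].
have iA_sym : (invmx A)^T = invmx A by rewrite trmx_inv A_sym.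
split=> [|y]; first by rewrite linearB /= !trmx_mul trmxK trmx_inv B_sym iA_sym mulmxA.
(* Completing the square: with [x := A^-1 W y], [u := W^T x], [v := B^-1 y],
   [y^T (B^-1 - W^T A^-1 W) y = x^T (A - W B W^T) x + (u - v)^T B (u - v)]. *)
set x := invmx A *m W *m y; set u := W^T *m x; set v := invmx B *m y.
set t := (y^T *m (W^T *m invmx A *m W) *m y) 0 0.
have xAx : (x^T *m A *m x) 0 0 = t by rewrite /x /t !trmx_mul iA_sym !mulmxA mulmxKV.
have xWBWx : x^T *m (W *m B *m W^T) *m x = u^T *m B *m u by rewrite /u !trmx_mul trmxK !mulmxA.
have uBv : (u^T *m B *m v) 0 0 = t by rewrite /u /v /x /t !trmx_mul trmxK iA_sym !mulmxA mulmxK.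
have vBu : (v^T *m B *m u) 0 0 = (u^T *m B *m v) 0 0 by exact: bilinear_formC.
have vBv : (v^T *m B *m v) 0 0 = (y^T *m invmx B *m y) 0 0.
  by rewrite /v trmx_mul trmx_inv B_sym !mulmxA mulmxKV.
have := AWB_psd x; have := B_psd (u - v).
rewrite [(u - v)^T]linearB /= !(mulmxBl, mulmxBr).
do ![rewrite [(_ - _ : 'M_1) 0 0]mxE [(- _ : 'M_1) 0 0]mxE]; rewrite -/t.
rewrite xAx xWBWx vBu uBv vBv.
lra.
Qed.

Lemma psdmx_dual_iff n m (A : 'M[R]_n) (B : 'M[R]_m) (W : 'M[R]_(n, m)) :
  psdmx A -> A \in unitmx -> psdmx B -> B \in unitmx ->
  psdmx (A - W *m B *m W^T) <-> psdmx (invmx B - W^T *m invmx A *m W).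
Proof.
move=> A_psd A_unit B_psd B_unit; have [A_sym _] := A_psd; have [B_sym _] := B_psd.
split; first exact: psdmx_dual.
move=> dual_psd; have := @psdmx_dual _ _ (invmx B) (invmx A) W^T.
rewrite !invmxK trmxK; apply; rewrite ?trmx_inv ?B_sym ?unitmx_inv //.
exact: psdmx_inv.
Qed.

End Loewner.

Section SchurFactorization.
Variables (R : realType) (p q : nat).
Variables (P11 : 'M[R]_p) (P12 : 'M[R]_(p, q)) (P22 : 'M[R]_q).
Hypotheses (P22_sym : P22^T = P22) (P22_unit : P22 \in unitmx).

Local Notation S := (schur P11 P12 P22).
Local Notation D := (invmx P22).
Local Notation U := (block_mx 1%:M (P12 *m D) 0 1%:M : 'M[R]_(p + q)).
Local Notation Delta := (block_mx S 0 0 P22).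

Lemma Psi_factor : Psi P11 P12 P22 = U *m Delta *m U^T.
Proof.
rewrite /Psi tr_block_mx !trmx1 trmx0 trmx_mul trmx_inv P22_sym !mulmx_block.
rewrite !(mulmx0, mul0mx, mulmx1, mul1mx, addr0, add0r) mulmxKV // mulKVmx // !mulmxA.
by rewrite /schur subrK.
Qed.

Lemma shear_unit : U \in unitmx.
Proof. by rewrite unitmxE det_ublock !det1 mulr1 unitr1. Qed.

Lemma quadZ_Psi Z :
  quadZ (Psi P11 P12 P22) Z = S + (Z + P12 *m D) *m P22 *m (Z + P12 *m D)^T.
Proof.
have shear : U^T *m col_mx 1%:M Z^T = col_mx 1%:M (Z + P12 *m D)^T.
  rewrite tr_block_mx !trmx1 trmx0 mul_block_col !(mul1mx, mulmx1, mul0mx, add0r, addr0).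
  by rewrite linearD /= addrC.
rewrite /quadZ Psi_factor.
have -> c : c^T *m (U *m Delta *m U^T) *m c = (U^T *m c)^T *m Delta *m (U^T *m c).
  by rewrite trmx_mul trmxK !mulmxA.
by rewrite shear quad_block_diag trmx1 mul1mx mulmx1 trmxK.
Qed.

Lemma Psi_sharp_quad Z : S \in unitmx ->
  (col_mx 1%:M Z)^T *m Psi_sharp (Psi P11 P12 P22) *m col_mx 1%:M Z
  = - (D + (Z + P12 *m D)^T *m invmx S *m (Z + P12 *m D)).
Proof.
move=> S_unit.
have Delta_unit : Delta \in unitmx by rewrite unitmxE det_ublock unitrM -!unitmxE S_unit.
have Jr_col : Jr R p q *m col_mx 1%:M Z = U *m col_mx (- (Z + P12 *m D)) 1%:M.
  rewrite /Jr !mul_block_col !(mul1mx, mul0mx, mulmx1, mulNmx, add0r, addr0).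
  by rewrite opprD subrK.
have col_Jl : (col_mx 1%:M Z)^T *m Jl R p q = - (Jr R p q *m col_mx 1%:M Z)^T.
  rewrite /Jl /Jr tr_col_mx mul_row_block mul_block_col.
  rewrite !(mul1mx, mul0mx, mulmx1, mulmx0, add0r, addr0) tr_col_mx trmx1.
  by rewrite mulmxN mulNmx mul1mx mulmx1 linearN /= opp_row_mx opprK.
rewrite /Psi_sharp !mulmxA col_Jl -mulmxA Jr_col mulNmx Psi_factor.
rewrite invmxM ?unitmx_mul ?unitmx_tr ?Delta_unit ?shear_unit //.
rewrite invmxM ?shear_unit // trmx_mul !mulNmx !mulmxA mulmxK ?unitmx_tr ?shear_unit //.
rewrite mulmxKV ?shear_unit // invmx_block_diag // quad_block_diag.
by rewrite [(- _)^T]linearN /= trmx1 mulmxN mulNmx mulNmx opprK mul1mx mulmx1 addrC.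
Qed.

End SchurFactorization.

Theorem lemmaA1 (R : realType) (p q : nat)
  (P11 : 'M[R]_p) (P12 : 'M[R]_(p, q)) (P22 : 'M[R]_q) :
  P11^T = P11 -> P22^T = P22 ->
  pdmx (schur P11 P12 P22) -> ndmx P22 ->
  forall Z : 'M[R]_(p, q),
    (inM (Psi P11 P12 P22) Z <-> inM1 (Psi P11 P12 P22) Z) /\
    (inM (Psi P11 P12 P22) Z <-> inM2 (Psi P11 P12 P22) (schur P11 P12 P22) Z).
Proof.
(* Symmetry of P11 is implied by that of the Schur complement and of P22. *)
move=> _ P22_sym S_pd P22_nd Z.
set S := schur P11 P12 P22; set W := Z + P12 *m invmx P22.
have P22_unit := ndmx_unit P22_nd; have S_unit := pdmx_unit S_pd.
have B_pd := ndmx_pdmxN P22_nd; have B_unit := pdmx_unit B_pd.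
have quadZ_eq : quadZ (Psi P11 P12 P22) Z = S - W *m (- P22) *m W^T.
  by rewrite quadZ_Psi // mulmxN mulNmx opprK.
have sharp_eq : (col_mx 1%:M Z)^T *m Psi_sharp (Psi P11 P12 P22) *m col_mx 1%:M Z
    = invmx (- P22) - W^T *m invmx S *m W.
  by rewrite Psi_sharp_quad // invmxN // opprD.
rewrite /inM /inM1 /inM2 quadZ_eq sharp_eq; split.
  exact: psdmx_dual_iff (pdmx_psdmx S_pd) S_unit (pdmx_psdmx B_pd) B_unit.
split=> [M_Z | [Q [-> [Q_psd _]]] //].
exists (S - W *m (- P22) *m W^T); split=> //; split=> //.
by rewrite subKr; apply: psdmx_congr; apply: pdmx_psdmx.
Qed.
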